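(* Let $G$ be a finite group and $V$ an irreducible $\mathbb{R}G$-module of odd dimension affording $\rho\colon G\to\mathrm{GL}(V)$. Let $H\trianglelefteq G$ be a normal subgroup such that $\rho(H)\neq\{1\}$ and $\rho(H)$ is a characteristic subgroup of $\rho(G)$. If $(H,S)$ has the eigenvalue one property for some irreducible submodule $S$ of $\mathrm{Res}^G_H(V)$, then $(G,V)$ has the eigenvalue one property. In particular, if $H$ has the eigenvalue one property, then $(G,V)$ has the eigenvalue one property.
   Context: For a finite group $K$ and a finite-dimensional $\mathbb{R}K$-module $W$ affording $\sigma\colon K\to\mathrm{GL}(W)$, the pair $(K,W)$ has the eigenvalue one property if for every $m\in N_{\mathrm{GL}(W)}(\sigma(K))$ of finite order there is $k\in K$ such that $\sigma(k)m$ has eigenvalue $1$. The group $K$ has the eigenvalue one property if $(K,W)$ has it for every irreducible non-trivial $\mathbb{R}K$-module $W$ of odd dimension. *)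

(* Real representations are matrix representations
   (row-vector convention of mxrepresentation.v) over an arbitrary
   R : realType (a model of the real numbers). *)
From HB Require Import structures.
From mathcomp Require Import all_boot all_order all_algebra all_fingroup.
From mathcomp Require Import mxrepresentation.
From mathcomp Require Export reals.
Set Implicit Arguments.
Unset Strict Implicit.
Unset Printing Implicit Defensive.
Import GRing.Theory.
Local Open Scope ring_scope.

Section EOP.
Variables (R : realType) (gT : finGroupType).

Definition normalizes_img (K : {group gT}) n (sK : mx_representation R K n)
    (m : 'M[R]_n) : Prop :=
  m \in unitmx /\
  (forall x, x \in K -> exists2 y, y \in K & invmx m *m sK x *m m = sK y) /\
  (forall y, y \in K -> exists2 x, x \in K & invmx m *m sK x *m m = sK y).

Definition finite_order n (m : 'M[R]_n) : Prop :=
  exists k : nat, (0 < k)%N /\ m ^+ k = 1%:M.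

Definition pair_eop (K : {group gT}) n (sK : mx_representation R K n) : Prop :=
  forall m : 'M[R]_n, normalizes_img sK m -> finite_order m ->
    exists2 k, k \in K & eigenvalue (sK k *m m) 1.

Definition nontrivial_repr (K : {group gT}) n (sK : mx_representation R K n) :=
  exists2 k, k \in K & sK k != 1%:M.

Definition group_eop (K : {group gT}) : Prop :=
  forall n (sK : mx_representation R K n),
    mx_irreducible sK -> nontrivial_repr sK -> odd n -> pair_eop sK.

(* rho(H) is a characteristic subgroup of rho(G): every automorphism f of the
   group rho(G) maps rho(H) into rho(H). *)
Definition char_image (G H : {group gT}) n (rG : mx_representation R G n) :=
  forall f : 'M[R]_n -> 'M[R]_n,
    (forall x, x \in G -> exists2 y, y \in G & f (rG x) = rG y) ->
    (forall y, y \in G -> exists2 x, x \in G & f (rG x) = rG y) ->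
    (forall x y, x \in G -> y \in G -> f (rG x) = f (rG y) -> rG x = rG y) ->
    (forall x y, x \in G -> y \in G -> f (rG x *m rG y) = f (rG x) *m f (rG y)) ->
    forall h, h \in H -> exists2 h', h' \in H & f (rG h) = rG h'.

End EOP.

From HB Require Import structures.
From mathcomp Require Import all_boot all_order all_algebra all_fingroup.
From mathcomp Require Import mxrepresentation reals polyrcf.
From Stdlib Require Import Classical_Prop.
Set Implicit Arguments.
Unset Strict Implicit.
Unset Printing Implicit Defensive.
Import GRing.Theory.
Local Open Scope ring_scope.

(* By Clifford theory V is the direct sum of G-translates S g_x (x in X) of a
   simple H-submodule S, so |X|, dim S and dim Hom_H(S, V) are all odd; the
   last one because dim Hom_H(S, V) is the number of x in X with S g_x
   isomorphic to S g_y, for every y in X, and the isomorphism relation on X is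
   symmetric with full diagonal.  A finite-order m normalising rho(G) also
   normalises the characteristic subgroup rho(H), so S m is isomorphic to some
   S g and x := m rho(g)^-1 fixes the isomorphism class of S.  As S has odd
   dimension, End_H(S) consists of scalars, so x acts (up to a fixed twist) as
   a linear map on the odd-dimensional space Hom_H(S, V).  An eigenvector of
   this map is an H-embedding of S with x-stable image, and the eigenvalue one
   property of (H, S) applied to x on that image gives h in H such that
   rho(h) x, hence rho(h a) m for some a in G, has eigenvalue 1.  For the
   second claim, every simple H-submodule S is non-trivial because the
   H-fixed space is a G-submodule of V. *)

Section OddDimension.
Variable F : rcfType.

Lemma odd_dim_eigenvalue k (A : 'M[F]_k) : odd k -> exists a, eigenvalue A a.
Proof.
move=> oddk; have even_char : ~~ odd (size (char_poly A)).
  by rewrite size_char_poly /= oddk.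
by have [a ra] := odd_poly_root even_char; exists a; rewrite eigenvalue_root_char.
Qed.

Lemma odd_irr_centgmx_scalar (gT : finGroupType) (K : {group gT}) k
    (r : mx_representation F K k) (C : 'M_k) :
  mx_irreducible r -> odd k -> centgmx r C -> exists c, C = c%:M.
Proof.
move=> irr oddk cC; have [a /eigenvalueP [v vC nz_v]] := odd_dim_eigenvalue C oddk.
exists a; apply/eqP; rewrite -subr_eq0; apply: contraNT nz_v => nzD.
have cD : centgmx r (C - a%:M).
  by apply/centgmxP => x Kx; rewrite mulmxBl mulmxBr (centgmxP cC) // scalar_mxC.
have uD := mx_Schur irr cD nzD.
have vD0 : v *m (C - a%:M) = 0 by rewrite mulmxBr vC mul_mx_scalar subrr.
by rewrite -[v](mulmxK uD) vD0 mul0mx.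
Qed.

Lemma odd_rank_stable_eigenvector k (M T : 'M[F]_k) :
  stablemx M T -> odd (\rank M) ->
  exists a (w : 'rV_k), [/\ (w <= M)%MS, w != 0 & w *m T = a *: w].
Proof.
move=> sMT oddM.
have [a /eigenvalueP[v vT nz_v]] := odd_dim_eigenvalue (restrictmx M T) oddM.
exists a, (v *m row_base M); split.
- by rewrite (submx_trans (submxMl _ _)) ?eq_row_base.
- by rewrite mulmx_free_eq0 ?row_base_free.
have restrictE : restrictmx M T *m row_base M = row_base M *m T.
  by rewrite mulmxKpV ?stablemx_row_base.
by rewrite -mulmxA -restrictE mulmxA vT scalemxAl.
Qed.

End OddDimension.

Lemma invmx_mulmx_swap (F : fieldType) k (u A B : 'M[F]_k) :
  u \in unitmx -> A *m u = u *m B -> B *m invmx u = invmx u *m A.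
Proof. by move=> uu e; rewrite -[B *m _](mulKmx uu) (mulmxA u) -e mulmxK. Qed.

Lemma invmx_conj_eq (F : fieldType) k (u A B : 'M[F]_k) :
  u \in unitmx -> invmx u *m A *m u = B <-> A *m u = u *m B.
Proof.
move=> uu; split=> [<- | e]; first by rewrite -mulmxA mulKVmx.
by rewrite -mulmxA e mulKmx.
Qed.

Section Normalizing.
Variables (F : fieldType) (gT : finGroupType) (K : {group gT}) (n : nat).
Variable r : mx_representation F K n.

Definition normalizing (m : 'M[F]_n) :=
  (forall a, a \in K -> exists2 b, b \in K & r a *m m = m *m r b) /\
  (forall b, b \in K -> exists2 a, a \in K & r a *m m = m *m r b).

Lemma normalizing_mul m1 m2 :
  normalizing m1 -> normalizing m2 -> normalizing (m1 *m m2).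
Proof.
move=> [N1 N1'] [N2 N2']; split=> [a Ka | c Kc].
  have [b Kb e1] := N1 a Ka; have [c Kc e2] := N2 b Kb.
  by exists c => //; rewrite mulmxA e1 -!mulmxA e2.
have [b Kb e2] := N2' c Kc; have [a Ka e1] := N1' b Kb.
by exists a => //; rewrite mulmxA e1 -!mulmxA e2.
Qed.

Lemma normalizing_invmx m : m \in unitmx -> normalizing m -> normalizing (invmx m).
Proof.
move=> um [N1 N2]; split=> [a Ka | b Kb].
  by have [b Kb /(invmx_mulmx_swap um) e] := N2 a Ka; exists b.
by have [a Ka /(invmx_mulmx_swap um) e] := N1 b Kb; exists a.
Qed.

Lemma mxmodule_normalizing k (U : 'M_(k, n)) m :
  mxmodule r U -> normalizing m -> mxmodule r (U *m m).
Proof.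
move=> modU [_ Nm]; apply/mxmoduleP => b Kb; have [a Ka e] := Nm b Kb.
by rewrite -mulmxA -e mulmxA submxMr // (mxmoduleP modU).
Qed.

Lemma mxsimple_normalizing U m :
  mxsimple r U -> m \in unitmx -> normalizing m -> mxsimple r (U *m m).
Proof.
move=> [modU nzU simU] um Nm; split; first exact: mxmodule_normalizing.
  by rewrite mulmx_free_eq0 // row_free_unit.
move=> V modV sVUm nzV.
have modVm := mxmodule_normalizing modV (normalizing_invmx um Nm).
have sVmU : (V *m invmx m <= U)%MS by rewrite -[U](mulmxK um) submxMr.
have nzVm : V *m invmx m != 0 by rewrite mulmx_free_eq0 // row_free_unit unitmx_inv.
by rewrite -[V](mulmxKV um) submxMr // simU.
Qed.

End Normalizing.

Lemma normalizing_normal_repr (F : fieldType) (gT : finGroupType) (G H : {group gT})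
    (nsHG : (H <| G)%g) n (rG : mx_representation F G n) g :
  g \in G -> normalizing (subg_repr rG (normal_sub nsHG)) (rG g).
Proof.
move=> Gg; have nHg : g \in 'N(H)%g := subsetP (normal_norm nsHG) g Gg.
have sHG := subsetP (normal_sub nsHG); split=> [a Ha | b Hb].
  have Hag : (a ^ g \in H)%g by rewrite memJ_norm.
  by exists (a ^ g)%g => //=; rewrite -!repr_mxM ?(sHG a) ?(sHG _ Hag) // conjgC.
have Hbg : (b ^ g^-1 \in H)%g by rewrite memJ_norm ?groupV.
by exists (b ^ g^-1)%g => //=; rewrite -!repr_mxM ?(sHG b) ?(sHG _ Hbg) // -conjgCV.
Qed.

Section ConjMx.
Variables (F : fieldType) (m n : nat) (V : 'M[F]_(m, n)).
Hypothesis freeV : row_free V.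

Lemma conjmx_unitmx f : stablemx V f -> f \in unitmx -> conjmx V f \in unitmx.
Proof.
move=> Vf uf; rewrite -row_free_unit /row_free -(mxrankMfree _ freeV).
by rewrite mulmxKpV // mxrankMfree ?row_free_unit // (eqP freeV).
Qed.

Lemma stablemxX f k : stablemx V f -> stablemx V (f ^+ k).
Proof.
move=> Vf; elim: k => [|k IHk]; first by rewrite expr0 -idmxE stablemxC.
by rewrite exprS -mulmxE stablemxM.
Qed.

Lemma conjmxX f k : stablemx V f -> conjmx V (f ^+ k) = conjmx V f ^+ k.
Proof.
move=> Vf; elim: k => [|k IHk]; first by rewrite !expr0 -!idmxE conjmx_scalar.
by rewrite !exprS -!mulmxE conjmxM ?inE ?stablemxX // IHk.
Qed.

End ConjMx.

(* [repr_mxX] only covers dimensions of the form n.+1. *)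
Lemma repr_mx_expg (F : fieldType) (gT : finGroupType) (K : {group gT}) n
    (r : mx_representation F K n) x k :
  x \in K -> r (x ^+ k)%g = r x ^+ k.
Proof.
move=> Kx; elim: k => [|k IHk]; first by rewrite expg0 repr_mx1 expr0 idmxE.
by rewrite expgSr repr_mxM ?groupX // IHk exprSr mulmxE.
Qed.

Section SubmodHom.
Variables (F : fieldType) (gT : finGroupType) (K : {group gT}) (n : nat).
Variables (r : mx_representation F K n) (U : 'M[F]_n) (modU : mxmodule r U).
Local Notation d := (\rank U).
Local Notation rU := (submod_repr modU).

(* Hom_K(U, W) as a space of mxvec-encoded d x n matrices, homomorphisms being
   written in the basis row_base U of U (see submod_hom_mxP). *)
Definition submod_hom_mx_def (W : 'M[F]_n) : 'M[F]_(d * n) :=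
  (kermx (lin_mx (mulmxr (cokermx W))) :&:
   \bigcap_(h in K) kermx (lin_mx (mulmx (rU h)) - lin_mx (mulmxr (r h))))%MS.

Fact submod_hom_mx_key : unit. Proof. by []. Qed.
Definition submod_hom_mx := locked_with submod_hom_mx_key submod_hom_mx_def.
Local Notation homU := submod_hom_mx.

Lemma submod_hom_mxP W (Fm : 'M_(d, n)) :
  reflect ((Fm <= W)%MS /\ forall h, h \in K -> rU h *m Fm = Fm *m r h)
          (Fm \in homU W)%MS.
Proof.
rewrite [submod_hom_mx]unlock sub_capmx.
apply: (iffP andP) => [[/sub_kermxP/eqP FW /sub_bigcapmxP hF] | [FW hF]].
  split=> [|h Kh]; first by move: FW; rewrite mul_vec_lin mxvec_eq0 -submxE.
  move/sub_kermxP: (hF h Kh); rewrite mulmxBr !mul_vec_lin /= => /eqP.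
  by rewrite subr_eq0 => /eqP /(can_inj mxvecK).
split.
  by apply/sub_kermxP; rewrite mul_vec_lin; apply/eqP; rewrite mxvec_eq0 -submxE.
apply/sub_bigcapmxP => h Kh; apply/sub_kermxP.
by rewrite mulmxBr !mul_vec_lin /= hF // subrr.
Qed.

Lemma submx_mxvec m1 m2 (A : 'M[F]_(m1, d * n)) (B : 'M[F]_(m2, d * n)) :
  (forall Fm : 'M_(d, n), (Fm \in A)%MS -> (Fm \in B)%MS) -> (A <= B)%MS.
Proof.
move=> sAB; apply/row_subP => i; rewrite -[row i A]vec_mxK.
by apply: sAB; rewrite vec_mxK row_sub.
Qed.

Lemma submod_hom_mxS W1 W2 : (W1 <= W2)%MS -> (homU W1 <= homU W2)%MS.
Proof.
move=> sW12; apply: submx_mxvec => Fm /submod_hom_mxP[sFW1 hF].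
by apply/submod_hom_mxP; split=> //; apply: submx_trans sW12.
Qed.

Lemma eqmx_submod_hom W1 W2 : (W1 :=: W2)%MS -> (homU W1 :=: homU W2)%MS.
Proof. by move=> eqW; apply/eqmxP; rewrite !submod_hom_mxS ?eqW. Qed.

Lemma submod_hom_mx0 : homU 0 = 0.
Proof.
apply/eqP; rewrite -submx0; apply: submx_mxvec => Fm /submod_hom_mxP[].
by rewrite submx0 => /eqP -> _; rewrite linear0 sub0mx.
Qed.

Lemma mxrank_submod_hom_adds W1 W2 :
  mxmodule r W1 -> mxmodule r W2 -> (W1 :&: W2 = 0)%MS ->
  \rank (homU (W1 + W2)%MS) = (\rank (homU W1) + \rank (homU W2))%N.
Proof.
move=> modW1 modW2 capW.
have capH : (homU W1 :&: homU W2 = 0)%MS.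
  apply/eqP/rowV0P => v; rewrite -[v]vec_mxK sub_capmx.
  case/andP=> /submod_hom_mxP[sW1 _] /submod_hom_mxP[sW2 _].
  have : (vec_mx v <= W1 :&: W2)%MS by rewrite sub_capmx sW1 sW2.
  by rewrite capW submx0 => /eqP ->; rewrite linear0.
have proj_hom (W3 W4 : 'M_n) Fm :
    mxmodule r W3 -> mxmodule r W4 -> (W3 :&: W4 = 0)%MS ->
    (Fm \in homU (W3 + W4)%MS)%MS -> (Fm *m proj_mx W3 W4 \in homU W3)%MS.
  move=> modW3 modW4 capW34 /submod_hom_mxP[sFW hF].
  apply/submod_hom_mxP; split=> [|h Kh]; first exact: proj_mx_sub.
  rewrite mulmxA hF //.
  by move/hom_mxP: (submx_trans sFW (proj_mx_hom capW34 modW3 modW4)); apply.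
rewrite -mxrank_disjoint_sum //; apply/eqmx_rank/andP; split; last first.
  by rewrite addsmx_sub !submod_hom_mxS ?addsmxSl ?addsmxSr.
apply: submx_mxvec => Fm homF; have [sFW _] := submod_hom_mxP _ _ homF.
rewrite -(add_proj_mx capW sFW) linearD addmx_sub_adds ?proj_hom //.
  by rewrite capmxC.
by rewrite addsmxC.
Qed.

Lemma mxrank_submod_hom_sum (I : finType) (X : {set I}) (W_ : I -> 'M_n) :
  (forall i, i \in X -> mxmodule r (W_ i)) -> mxdirect (\sum_(i in X) W_ i) ->
  \rank (homU (\sum_(i in X) W_ i)%MS) = (\sum_(i in X) \rank (homU (W_ i)))%N.
Proof.
have [k] := ubnP #|X|; elim: k X => // k IHk X ltXk modW dxX.
have [->|[a Xa]] := set_0Vmem X.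
  by rewrite !big_set0 submod_hom_mx0 mxrank0.
have : mxdirect (W_ a + \sum_(i in X :\ a) W_ i).
  by move: dxX; rewrite !mxdirectE /= (big_setD1 a Xa) [X in _ == X](big_setD1 a Xa).
rewrite mxdirect_addsE /= => /and3P[_ dxX' /eqP capW].
have modX' i : i \in X :\ a -> mxmodule r (W_ i).
  by rewrite in_setD1 => /andP[_ /modW].
rewrite (big_setD1 a Xa) /= [RHS](big_setD1 a Xa) /=.
rewrite mxrank_submod_hom_adds ?modW ?sumsmx_module // IHk //.
by rewrite (cardsD1 a X) Xa in ltXk.
Qed.

Lemma submod_repr_row_base h :
  h \in K -> rU h *m row_base U = row_base U *m r h.
Proof.
by move=> Kh; have := val_submodJ modU 1%:M Kh; rewrite /val_submod /= !mul1mx.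
Qed.

Lemma submod_hom_extend (Fm : 'M_(d, n)) :
  (forall h, h \in K -> rU h *m Fm = Fm *m r h) ->
  exists2 f, (U <= dom_hom_mx r f)%MS & (U *m f :=: Fm)%MS.
Proof.
move=> hF; pose f := pinvmx (row_base U) *m Fm.
have baseF : row_base U *m f = Fm.
  by rewrite mulmxA mulmxVp ?row_base_free ?mul1mx.
exists f; last by rewrite -baseF; apply: eqmx_sym; apply: eqmxMr; apply: eq_row_base.
rewrite -(eq_row_base U); apply/hom_mxP => h Kh.
by rewrite -submod_repr_row_base // -mulmxA baseF hF // baseF.
Qed.

Lemma row_free_submod_hom (Fm : 'M_(d, n)) : mxsimple r U ->
  (forall h, h \in K -> rU h *m Fm = Fm *m r h) -> Fm != 0 -> row_free Fm.
Proof.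
move=> /submod_mx_irr[_ _ simU] hF nzF; rewrite -kermx_eq0.
apply: contraR nzF => nzK; have modK : mxmodule rU (kermx Fm).
  apply/mxmoduleP => h Kh; apply/sub_kermxP.
  by rewrite -mulmxA hF // mulmxA mulmx_ker mul0mx.
by have /sub_kermxP := simU _ modK (submx1 _) nzK; rewrite mul1mx => ->.
Qed.

Lemma mxrank_submod_hom_noniso W :
  mxsimple r U -> mxsimple r W -> ~ mx_iso r U W -> \rank (homU W) = 0%N.
Proof.
move=> simU simW not_isoUW; apply/eqP; rewrite mxrank_eq0; apply/rowV0P => v.
rewrite -[v]vec_mxK => /submod_hom_mxP[sFW hF].
have [-> | nzF] := eqVneq (vec_mx v) 0; first by rewrite linear0.
have [f homUf defUf] := submod_hom_extend hF.
case: not_isoUW; apply: (mx_Schur_iso simU simW homUf); first by rewrite defUf.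
by rewrite (eqmx_eq0 defUf).
Qed.

End SubmodHom.

Section SubmodHomOdd.
Variables (F : rcfType) (gT : finGroupType) (K : {group gT}) (n : nat).
Variables (r : mx_representation F K n) (U : 'M[F]_n) (modU : mxmodule r U).
Hypothesis simU : mxsimple r U.
Local Notation d := (\rank U).
Local Notation rU := (submod_repr modU).
Local Notation homU := (submod_hom_mx modU).

Lemma mxrank_submod_hom_iso W : odd d -> mx_iso r U W -> \rank (homU W) = 1%N.
Proof.
move=> oddU [f uf homUf defW]; pose F0 := row_base U *m f.
have /hom_mxP homBf : (row_base U <= dom_hom_mx r f)%MS by rewrite eq_row_base.
have hF0 h : h \in K -> rU h *m F0 = F0 *m r h.
  by move=> Kh; rewrite mulmxA submod_repr_row_base // homBf.
have freeF0 : row_free F0.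
  by rewrite /row_free mxrankMfree ?row_free_unit //; apply: row_base_free.
have defF0 : (F0 :=: W)%MS := eqmx_trans (eqmxMr f (eq_row_base U)) defW.
have nzF0 : F0 != 0.
  by rewrite -mxrank_eq0 (eqP freeF0) mxrank_eq0; case: simU.
suff defH : (homU W == mxvec F0)%MS.
  by rewrite (eqmx_rank defH) rank_rV mxvec_eq0 nzF0.
apply/andP; split; last by apply/submod_hom_mxP; rewrite defF0.
apply: submx_mxvec => Fm /submod_hom_mxP[sFW hF].
have defFm : Fm *m pinvmx F0 *m F0 = Fm by rewrite mulmxKpV ?defF0.
have cC : centgmx rU (Fm *m pinvmx F0).
  apply/centgmxP => h Kh; apply: (row_free_inj freeF0).
  by rewrite -mulmxA hF0 // mulmxA defFm -mulmxA defFm hF.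
have [c defC] := odd_irr_centgmx_scalar (proj2 (submod_mx_irr modU) simU) oddU cC.
by rewrite -defFm defC mul_scalar_mx linearZ scalemx_sub.
Qed.

Lemma mxrank_submod_hom_direct (I : finType) (X : {set I}) (W_ : I -> 'M_n) :
  odd d -> (forall i, i \in X -> mxsimple r (W_ i)) -> mxdirect (\sum_(i in X) W_ i) ->
  \rank (homU (\sum_(i in X) W_ i)%MS) = (\sum_(i in X) mxsimple_iso r U (W_ i))%N.
Proof.
move=> oddU simW dxW; rewrite mxrank_submod_hom_sum; first last.
- exact: dxW.
- by move=> i /simW/mxsimple_module.
apply: eq_bigr => i Xi.
have [isoUW | not_isoUW] := @mxsimple_isoP _ _ _ _ r U (W_ i) simU.
  exact: mxrank_submod_hom_iso.
exact: mxrank_submod_hom_noniso (simW i Xi) not_isoUW.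
Qed.

Lemma submod_hom_stable x :
  x \in unitmx -> normalizing r x -> mx_iso r U (U *m x) -> odd (\rank (homU 1%:M)) ->
  exists Fm : 'M_(d, n),
    [/\ row_free Fm, forall h, h \in K -> rU h *m Fm = Fm *m r h & stablemx Fm x].
Proof.
(* P, the restriction to U of f x^-1 with f : U ~= U x, conjugates rU h into
   rU h' whenever x r h = r h' x; hence Fm |-> P Fm x is a linear map of
   Hom_K(U, V), and its eigenvectors have x-stable images. *)
move=> ux [_ Nx] [f uf homUf defUx] oddH; pose P := restrictmx U (f *m invmx x).
have stableP : stablemx U (f *m invmx x).
  by rewrite mulmxA (eqmxMr _ defUx) mulmxK.
have uP : P \in unitmx.
  rewrite conjmx_unitmx ?row_base_free ?stablemx_row_base //.
  by rewrite unitmx_mul uf unitmx_inv.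
have PE : P *m row_base U = row_base U *m (f *m invmx x).
  by rewrite mulmxKpV ?stablemx_row_base.
have /hom_mxP homBf : (row_base U <= dom_hom_mx r f)%MS by rewrite eq_row_base.
have hP h h' : h \in K -> h' \in K -> r h' *m x = x *m r h -> rU h *m P = P *m rU h'.
  move=> Kh Kh' e; apply: (row_free_inj (row_base_free U)).
  have -> : rU h *m P *m row_base U = row_base U *m f *m r h *m invmx x.
    by rewrite -[rU h *m P *m _]mulmxA PE mulmxA submod_repr_row_base // mulmxA homBf.
  have -> : P *m rU h' *m row_base U = row_base U *m f *m invmx x *m r h'.
    by rewrite -[P *m _ *m _]mulmxA submod_repr_row_base // mulmxA PE mulmxA.
  by rewrite -[_ *m r h *m _]mulmxA (invmx_mulmx_swap ux e) mulmxA.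
pose Tm := lin_mx (mulmx P) *m lin_mx (mulmxr x).
have TmE (Fm : 'M_(d, n)) : mxvec Fm *m Tm = mxvec (P *m Fm *m x).
  by rewrite mulmxA !mul_vec_lin.
have homT (Fm : 'M_(d, n)) :
    (Fm \in homU 1%:M)%MS -> (P *m Fm *m x \in homU 1%:M)%MS.
  case/submod_hom_mxP => _ hF; apply/submod_hom_mxP.
  split=> [|h Kh]; first exact: submx1.
  have [h' Kh' e] := Nx h Kh; rewrite -(mulmxA (P *m Fm)) -e (mulmxA (P *m Fm)).
  rewrite -(mulmxA P Fm (r h')) -hF // (mulmxA P) -(hP h h') //.
  by rewrite -!(mulmxA (rU h)).
have stableT : stablemx (homU 1%:M) Tm.
  apply/row_subP => i; rewrite row_mul -[row i _]vec_mxK TmE homT //.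
  by rewrite vec_mxK row_sub.
have [a [w [wH nz_w wT]]] := odd_rank_stable_eigenvector stableT oddH.
have /submod_hom_mxP[_ hF] : (vec_mx w \in homU 1%:M)%MS by rewrite vec_mxK.
have PFx : P *m vec_mx w *m x = a *: vec_mx w.
  by apply: (can_inj mxvecK); rewrite -TmE vec_mxK wT linearZ /= vec_mxK.
exists (vec_mx w); split=> //.
  apply: row_free_submod_hom simU hF _.
  by apply: contraNneq nz_w => /(congr1 mxvec); rewrite vec_mxK linear0 => ->.
by rewrite -[_ *m x](mulKmx uP) (mulmxA P) PFx -scalemxAr scalemx_sub ?submxMl.
Qed.

End SubmodHomOdd.

Lemma odd_sum_sym_refl (T : finType) (X : {set T}) (b : T -> T -> bool) :
  {in X &, forall x y, b x y = b y x} -> {in X, forall x, b x x} ->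
  odd (\sum_(y in X) \sum_(x in X) b y x) = odd #|X|.
Proof.
have [k] := ubnP #|X|; elim: k X => // k IHk X ltXk symb reflb.
have [-> | [a Xa]] := set_0Vmem X; first by rewrite !big_set0 cards0.
have subX : {subset X :\ a <= X} by move=> y /setD1P[].
have splitE : (\sum_(y in X :\ a) \sum_(x in X) b y x
    = \sum_(x in X :\ a) b a x + \sum_(y in X :\ a) \sum_(x in X :\ a) b y x)%N.
  rewrite -big_split; apply: eq_bigr => y Xy.
  by rewrite (big_setD1 a Xa) /= symb // subX.
rewrite (cardsD1 a X) Xa (big_setD1 a Xa) splitE (big_setD1 a Xa) /= reflb //.
rewrite addnA -[(true + _ + _)%N]addnA addnn !oddD odd_double /= IHk //.
- by rewrite (cardsD1 a X) Xa in ltXk.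
- by move=> x y Xx Xy; rewrite symb ?subX.
- by move=> x Xx; rewrite reflb ?subX.
Qed.

Section CliffordOdd.
Variables (F : rcfType) (gT : finGroupType) (G H : {group gT}) (nsHG : (H <| G)%g).
Variables (n : nat) (rG : mx_representation F G n).
Local Notation rH := (subg_repr rG (normal_sub nsHG)).

Lemma mxrank_direct_translates (S : 'M_n) (X : {set gT}) :
  X \subset G -> mxdirect (\sum_(x in X) S *m rG x) ->
  \rank (\sum_(x in X) S *m rG x)%MS = (#|X| * \rank S)%N.
Proof.
move=> sXG dxX; rewrite (mxdirectP dxX) /= -sum_nat_const.
by apply: eq_bigr => x Xx; rewrite mxrankMfree ?repr_mx_free ?(subsetP sXG).
Qed.

Hypotheses (irrG : mx_irreducible rG) (oddn : odd n).

Lemma odd_Clifford_basis (S : 'M_n) (X : {set gT}) :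
  X \subset G -> (\sum_(x in X) S *m rG x :=: 1%:M)%MS ->
  mxdirect (\sum_(x in X) S *m rG x) -> odd #|X| && odd (\rank S).
Proof.
by move=> sXG defX dxX; rewrite -oddM -(mxrank_direct_translates sXG dxX) defX mxrank1.
Qed.

Lemma odd_rank_Clifford S : mxsimple rH S -> odd (\rank S).
Proof.
move=> simS; have [X sXG [defX dxX]] := Clifford_basis irrG simS.
by case/andP: (odd_Clifford_basis sXG defX dxX).
Qed.

Lemma odd_rank_Clifford_hom S (modS : mxmodule rH S) :
  mxsimple rH S -> odd (\rank (submod_hom_mx modS 1%:M)).
Proof.
move=> simS; have [X sXG [defX dxX]] := Clifford_basis irrG simS.
have /andP[oddX oddS] := odd_Clifford_basis sXG defX dxX.
have GX := subsetP sXG.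
pose b y x := mxsimple_iso rH (S *m rG y) (S *m rG x).
have isoP y x : y \in G -> reflect (mx_iso rH (S *m rG y) (S *m rG x)) (b y x).
  by move=> Gy; apply: mxsimple_isoP; apply: Clifford_simple.
have rowE y : y \in X -> \rank (submod_hom_mx modS 1%:M) = (\sum_(x in X) b y x)%N.
  move=> Xy; have Gy := GX y Xy; have Gy' := groupVr Gy.
  pose W x := S *m rG x *m rG y^-1%g.
  have rkW : \rank (\sum_(x in X) W x)%MS = n.
    rewrite -(sumsmxMr _ (fun x => S *m rG x)) mxrankMfree ?repr_mx_free //.
    by rewrite defX mxrank1.
  have defW : (\sum_(x in X) W x :=: 1%:M)%MS.
    by apply/eqmxP; rewrite submx1 sub1mx /row_full rkW eqxx.
  have dxW : mxdirect (\sum_(x in X) W x).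
    apply/mxdirectP; rewrite /= rkW -[LHS](mxrank1 F) -defX (mxdirectP dxX) /=.
    by apply: eq_bigr => x Xx; rewrite /W [RHS]mxrankMfree ?repr_mx_free.
  rewrite -(eqmx_submod_hom modS defW) (mxrank_submod_hom_direct modS simS) // => [|x Xx].
    apply: eq_bigr => x Xx; congr (nat_of_bool _).
    apply/(mxsimple_isoP simS)/(isoP y x Gy) => [isoSW | isoSyx].
      by have := Clifford_iso2 isoSW Gy; rewrite /W repr_mxKV.
    by have := Clifford_iso2 isoSyx Gy'; rewrite repr_mxK.
  by do 2!apply: Clifford_simple => //; rewrite ?GX.
have bsym : {in X &, forall x y, b x y = b y x}.
  move=> x y Xx Xy; apply/(isoP x y (GX x Xx))/(isoP y x (GX y Xy)); exact: mx_iso_sym.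
have brefl : {in X, forall x, b x x}.
  by move=> x Xx; apply/(isoP x x (GX x Xx)); apply: mx_iso_refl.
have sumE : (\sum_(y in X) \sum_(x in X) b y x
              = #|X| * \rank (submod_hom_mx modS 1%:M))%N.
  by rewrite -sum_nat_const; apply: eq_bigr => y Xy; rewrite -rowE.
by have := odd_sum_sym_refl bsym brefl; rewrite sumE oddM oddX.
Qed.

End CliffordOdd.

Section EigenvalueOne.
Variables (R : realType) (gT : finGroupType) (K : {group gT}).

Lemma normalizes_imgP n (r : mx_representation R K n) m :
  normalizes_img r m <-> m \in unitmx /\ normalizing r m.
Proof.
by split=> -[um [N1 N2]]; do 2!split=> //;
  [move=> a /N1 | move=> b /N2 | move=> a /N1 | move=> b /N2];
  case=> c Kc /(invmx_conj_eq _ _ um); exists c.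
Qed.

Variables (n : nat) (r : mx_representation R K n).

Lemma finite_order_mul_repr m g :
  normalizing r m -> finite_order m -> g \in K -> finite_order (m *m r g).
Proof.
move=> [Nm _] [k [k_gt0 mk]] Kg.
have powE j : exists2 c, c \in K & (m *m r g) ^+ j = m ^+ j *m r c.
  elim: j => [|j [c Kc IHj]].
    by exists 1%g; rewrite ?group1 // !expr0 repr_mx1 mulmx1.
  have [b Kb e] := Nm c Kc; exists (b * g)%g; first by rewrite groupM.
  rewrite exprSr -mulmxE IHj exprSr -mulmxE repr_mxM // -!mulmxA (mulmxA (r c)) e.
  by rewrite !mulmxA.
have [c Kc e] := powE k; exists (k * #[c]%g)%N.
split; first by rewrite muln_gt0 k_gt0 order_gt0.
by rewrite exprM e mk mul1mx -repr_mx_expg // expg_order repr_mx1.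
Qed.

Lemma pair_eop_embedding n' (r' : mx_representation R K n') (V : 'M_(n', n)) x :
  row_free V -> (forall a, a \in K -> r' a *m V = V *m r a) -> pair_eop r' ->
  stablemx V x -> x \in unitmx -> normalizing r x -> finite_order x ->
  exists2 h, h \in K & eigenvalue (r h *m x) 1.
Proof.
move=> freeV r'V eop' Vx ux [Nx1 Nx2] [k [k_gt0 xk]].
have Vr a : a \in K -> stablemx V (r a) by move=> Ka; rewrite -r'V // submxMl.
have r'E a : a \in K -> r' a = conjmx V (r a).
  by move=> Ka; apply: (row_free_inj freeV); rewrite r'V // mulmxKpV ?Vr.
have conjM a : a \in K -> conjmx V (r a *m x) = r' a *m conjmx V x.
  by move=> Ka; rewrite conjmxM ?inE ?Vr // r'E.
have conjN a b : a \in K -> b \in K -> r a *m x = x *m r b ->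
    r' a *m conjmx V x = conjmx V x *m r' b.
  by move=> Ka Kb e; rewrite -conjM // e conjmxM ?inE ?Vr // -r'E.
have [h Kh] : exists2 h, h \in K & eigenvalue (r' h *m conjmx V x) 1.
  apply: eop'; last by exists k; rewrite -conjmxX // xk conjmx_scalar.
  apply/normalizes_imgP; split; first exact: conjmx_unitmx.
  split=> [a Ka | b Kb].
    by have [b Kb e] := Nx1 a Ka; exists b; last exact: conjN.
  by have [a Ka e] := Nx2 b Kb; exists a; last exact: conjN.
rewrite -conjM // => eig1; exists h => //.
exact: (eigenvalue_conjmx (stablemxM (Vr h Kh) Vx) freeV).
Qed.

End EigenvalueOne.

Section CharacteristicImage.
Variables (R : realType) (gT : finGroupType) (G H : {group gT}) (n : nat).
Variables (rG : mx_representation R G n) (nsHG : (H <| G)%g).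
Local Notation rH := (subg_repr rG (normal_sub nsHG)).
Hypothesis charH : char_image H rG.

Lemma char_image_conj u : u \in unitmx -> normalizing rG u ->
  forall h, h \in H -> exists2 h', h' \in H & invmx u *m rG h *m u = rG h'.
Proof.
move=> uu [Nu1 Nu2]; apply: (@charH (fun A => invmx u *m A *m u)).
- by move=> a Ga; have [b Gb /(invmx_conj_eq _ _ uu)] := Nu1 a Ga; exists b.
- by move=> b Gb; have [a Ga /(invmx_conj_eq _ _ uu)] := Nu2 b Gb; exists a.
- move=> a b _ _ /(congr1 (fun A => u *m A *m invmx u)).
  by rewrite !mulmxA mulmxV // !mul1mx !mulmxK.
- by move=> a b _ _; rewrite !mulmxA mulmxK.
Qed.

Lemma char_image_normalizing m :
  m \in unitmx -> normalizing rG m -> normalizing rH m.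
Proof.
move=> um Nm; split=> [a Ha | b Hb].
  by have [b Hb /(invmx_conj_eq _ _ um)] := char_image_conj um Nm Ha; exists b.
have um' : invmx m \in unitmx by rewrite unitmx_inv.
have [a Ha e] := char_image_conj um' (normalizing_invmx um Nm) Hb.
by exists a => //=; rewrite -e invmxK mulmxKV.
Qed.

End CharacteristicImage.

Section Corollary.
Variables (R : realType) (gT : finGroupType) (G H : {group gT}) (n : nat).
Variables (rG : mx_representation R G n) (nsHG : (H <| G)%g).
Local Notation rH := (subg_repr rG (normal_sub nsHG)).
Hypotheses (irrG : mx_irreducible rG) (oddn : odd n) (charH : char_image H rG).

Lemma pair_eop_of_submod S (modS : mxmodule rH S) :
  mxsimple rH S -> pair_eop (submod_repr modS) -> pair_eop rG.
Proof.
move=> simS eopS m /normalizes_imgP[um NmG] finm.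
have NmH := char_image_normalizing nsHG charH um NmG.
have [X sXG [defX _]] := Clifford_basis irrG simS.
have [g Xg isoSg] : exists2 g, g \in X & mx_iso rH (S *m rG g) (S *m m).
  have simSm := mxsimple_normalizing simS um NmH.
  have sSmX : (S *m m <= (\sum_(x in X) S *m rG x)%MS *m 1%:M)%MS.
    by rewrite mulmx1 defX submx1.
  have [g Xg isoSg] := hom_mxsemisimple_iso simSm
    (fun x Xx _ => Clifford_simple simS (subsetP sXG x Xx)) (scalar_mx_hom _ _ _) sSmX.
  by exists g.
have Gg' : (g^-1 \in G)%g by rewrite groupV (subsetP sXG).
pose x := m *m rG g^-1%g.
have ux : x \in unitmx by rewrite unitmx_mul um repr_mx_unit.
have Nx : normalizing rH x := normalizing_mul NmH (normalizing_normal_repr nsHG rG Gg').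
have isoSx : mx_iso rH S (S *m x).
  by have := Clifford_iso2 isoSg Gg'; rewrite repr_mxK ?(subsetP sXG) // mulmxA.
have [Fm [freeF homF stableF]] :=
  submod_hom_stable simS ux Nx isoSx (odd_rank_Clifford_hom irrG oddn modS simS).
have [h Hh eig1] :=
  pair_eop_embedding freeF homF eopS stableF ux Nx (finite_order_mul_repr NmG finm Gg').
have [a Ga ea] := NmG.2 _ Gg'.
have Gh : h \in G := subsetP (normal_sub nsHG) h Hh.
by exists (h * a)%g; rewrite ?groupM // repr_mxM // -mulmxA ea.
Qed.

Lemma nontrivial_submod_repr S (modS : mxmodule rH S) : S != 0 ->
  (exists2 h, h \in H & rG h != 1%:M) -> nontrivial_repr (submod_repr modS).
Proof.
move=> nzS [h0 Hh0 ntH]; apply/exists_inP; apply: contraNT ntH => /exists_inPn trivS.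
have fixS : (S <= rfix_mx rG H)%MS.
  rewrite -(eq_row_base S); apply/rfix_mxP => k Hk.
  by rewrite -(submod_repr_row_base modS Hk) (eqP (negbNE (trivS k Hk))) mul1mx.
have nz_fix : rfix_mx rG H != 0 by apply: contraTneq fixS => ->; rewrite submx0.
have [_ _ simG] := irrG.
have /rfix_mxP/(_ h0 Hh0) := simG _ (normal_rfix_mx_module rG nsHG) (submx1 _) nz_fix.
by rewrite mul1mx => ->.
Qed.

Lemma pair_eop_of_group_eop :
  (exists2 h, h \in H & rG h != 1%:M) -> group_eop R H -> pair_eop rG.
Proof.
move=> ntH eopH; have [_ nz1 _] := irrG.
apply: NNPP => not_eopG; have /classicP := mxsimple_exists (mxmodule1 rH) nz1.
apply=> -[S simS _]; apply: not_eopG; have modS := mxsimple_module simS.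
apply: (pair_eop_of_submod (modS := modS) simS); apply: eopH.
- exact/submod_mx_irr.
- by apply: nontrivial_submod_repr ntH; case: simS.
- exact: odd_rank_Clifford simS.
Qed.

End Corollary.

Theorem corollary3p1p4 (R : realType) (gT : finGroupType) (G H : {group gT})
    (n : nat) (rG : mx_representation R G n) (nHG : (H <| G)%g) :
  mx_irreducible rG -> odd n ->
  (exists2 h, h \in H & rG h != 1%:M) ->
  char_image H rG ->
  (forall (S : 'M[R]_n)
      (modS : mxmodule (subg_repr rG (normal_sub nHG)) S),
      mxsimple (subg_repr rG (normal_sub nHG)) S ->
      pair_eop (submod_repr modS) -> pair_eop rG) /\
  (group_eop R H -> pair_eop rG).
Proof.
move=> irrG oddn ntH charH; split=> [S modS | eopH].
  exact: pair_eop_of_submod irrG oddn charH S modS.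
exact: pair_eop_of_group_eop nHG irrG oddn charH ntH eopH.
Qed.
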